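(* In the setting below, the natural homomorphism $W(E_7)\to O(A_{L_+})$ is surjective. Moreover, the action of $O(A_{L_+})$ on $A_{L_+}$ is transitive on each of the sets $C_1=\{x: q_{L_+}(x)=-1/2\}$ and $C_2=\{x:q_{L_+}(x)=1/2\}$, and has exactly two orbits on each of the sets $C_3=\{x:q_{L_+}(x)=1\}$ and $C_4=\{x:q_{L_+}(x)=0\}$.
   Context: Let $C\subset\mathbb P^2$ be a smooth plane quartic $\{f=0\}$, $X_C=\{t^4=f\}\subset\mathbb P^3$ (a $K3$ surface), $\tau(x:y:z:t)=(x:y:z:-t)$, $S_C=X_C/\langle\tau\rangle$ (a Del Pezzo surface of degree 2, the blow-up of $\mathbb P^2$ in seven points, with $Pic(S_C)$ having basis $e_0,\dots,e_7$: $e_0$ the pull-back of a line, $e_i$ the exceptional curves; canonical class $k=-3e_0+e_1+\dots+e_7$), and $\pi_2:X_C\to S_C$ the quotient map. Let $L_+=\{x\in H^2(X_C,\mathbb Z):\tau^*x=x\}$, which equals $\pi_2^*Pic(S_C)$. $A_{L_+}=L_+^*/L_+\cong(\mathbb Z/2)^8$ is the discriminant group with discriminant quadratic form $q_{L_+}:A_{L_+}\to\mathbb Q/2\mathbb Z$, $q(x+L_+)=(x,x)\bmod 2\mathbb Z$, and $O(A_{L_+})$ is the group of automorphisms of $A_{L_+}$ preserving $q_{L_+}$. The Weyl group $W(E_7)$ of the root lattice $k^\perp\subset Pic(S_C)$ acts on $Pic(S_C)$ fixing $k$, hence on $L_+$ by pull-back, and thus on $A_{L_+}$. *)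

From mathcomp Require Import all_boot all_order all_algebra.
Set Implicit Arguments. Unset Strict Implicit. Unset Printing Implicit Defensive.
Import GRing.Theory Num.Theory.
Local Open Scope ring_scope.

(* Pic(S_C) = Z e_0 + ... + Z e_7, with (e_0,e_0)=1, (e_i,e_i)=-1 (i>=1),
   orthogonal basis.  A class is its coordinate row vector. *)
Definition Pic := 'rV[int]_8.

Definition bilP (x y : Pic) : int :=
  \sum_(i < 8) (if nat_of_ord i == 0%N then 1 else -1) * (x 0 i * y 0 i).

Definition kcan : Pic := \row_(i < 8) (if nat_of_ord i == 0%N then -3 else 1).

Definition is_root (r : Pic) : Prop := bilP r r = -2 /\ bilP r kcan = 0.

Definition refl (r x : Pic) : Pic := x + (bilP x r) *: r.

(* the element s_{r_1} o ... o s_{r_n} of W(E_7) acting on Pic *)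
Definition wact (rs : seq Pic) (x : Pic) : Pic := foldr refl x rs.

(* L_+ = pi_2^* Pic(S_C); pull-back by the degree 2 map multiplies the form by 2 *)
Definition bilL (x y : Pic) : int := 2 * bilP x y.

(* Since L_+ ~ Pic(2) with unimodular Pic, L_+^* = (1/2) L_+, and
   A_{L_+} = L_+^*/L_+ ~ L_+/2L_+; a : AL stands for the class of (1/2) pi_2^* (lift a). *)
Definition AL := 'rV['Z_2]_8.

Definition liftA (a : AL) : Pic := \row_(i < 8) ((nat_of_ord (a 0 i))%:Z).
Definition redA (v : Pic) : AL := \row_(i < 8) ((v 0 i)%:~R).

(* q_{L_+}((1/2) x) = (x,x)_{L_+}/4, a rational number, taken mod 2Z *)
Definition qL (a : AL) : rat := (bilL (liftA a) (liftA a))%:~R / 4%:R.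

Definition eqmod2Z (u v : rat) : Prop := exists k : int, u - v = 2%:R * k%:~R.

Definition OA (f : AL -> AL) : Prop :=
  bijective f /\ {morph f : x y / x + y} /\ (forall x, eqmod2Z (qL (f x)) (qL x)).

Definition Wind (rs : seq Pic) (a : AL) : AL := redA (wact rs (liftA a)).

Definition Cset (c : rat) (x : AL) : Prop := eqmod2Z (qL x) c.

Definition transitive_on (P : AL -> Prop) : Prop :=
  forall x y, P x -> P y -> exists f, OA f /\ f x = y.

Definition exactly_two_orbits (P : AL -> Prop) : Prop :=
  exists x1 x2, [/\ P x1, P x2, ~ (exists f, OA f /\ f x1 = x2) &
    forall z, P z -> exists f, OA f /\ (f x1 = z \/ f x2 = z)].

(* Reflections in roots are isometries of Pic(S_C) fixing k, and reduction mod 2 identifies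
   A_{L_+} with Pic/2Pic, with q(x) = (x,x)/2 mod 2; so W(E_7) maps into O(A_{L_+}).
   Surjectivity is a stabilizer-chain argument along a basis u_0, ..., u_7 of A_{L_+}: if
   f in O(A_{L_+}) fixes u_0, ..., u_{m-1}, then f(u_m) has the same value of q as u_m and
   f(u_m) + u_j the same as u_m + u_j; a finite computation shows that words in the
   reflections fixing u_0, ..., u_{m-1} carry u_m to every such vector, so f can be composed
   with an element of W(E_7) fixing one more basis vector.  The orbits are found in the same
   way by a breadth-first search through the reflections; 0 and the class of k are fixed by
   every element of O(A_{L_+}), the latter because they all come from W(E_7). *)

From mathcomp Require Import all_boot all_order all_algebra.
From mathcomp Require Import ring.
Set Implicit Arguments. Unset Strict Implicit. Unset Printing Implicit Defensive.
Import GRing.Theory Num.Theory.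
Local Open Scope ring_scope.

Lemma bilP_sym x y : bilP x y = bilP y x.
Proof. by apply: eq_bigr => i _; rewrite (mulrC (x 0 i)). Qed.

Lemma bilPDl x y z : bilP (x + y) z = bilP x z + bilP y z.
Proof. by rewrite /bilP -big_split; apply: eq_bigr => i _; rewrite !mxE mulrDl mulrDr. Qed.

Lemma bilPZl c x z : bilP (c *: x) z = c * bilP x z.
Proof. by rewrite /bilP mulr_sumr; apply: eq_bigr => i _; rewrite !mxE; ring. Qed.

Lemma bilPDr x y z : bilP z (x + y) = bilP z x + bilP z y.
Proof. by rewrite !(bilP_sym z) bilPDl. Qed.

Lemma bilPZr c x z : bilP z (c *: x) = c * bilP z x.
Proof. by rewrite !(bilP_sym z) bilPZl. Qed.

Lemma reflD r x y : refl r (x + y) = refl r x + refl r y.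
Proof. by rewrite /refl bilPDl scalerDl addrACA. Qed.

Lemma reflZ r c x : refl r (c *: x) = c *: refl r x.
Proof. by rewrite /refl bilPZl scalerDr scalerA. Qed.

Section Reflection.

Variable r : Pic.
Hypothesis r_norm : bilP r r = -2.

Lemma bilP_refl x y : bilP (refl r x) (refl r y) = bilP x y.
Proof.
rewrite /refl bilPDl !bilPDr !bilPZl !bilPZr r_norm (bilP_sym r y); ring.
Qed.

Lemma reflK : involutive (refl r).
Proof.
move=> x; rewrite /refl bilPDl bilPZl r_norm -addrA -scalerDl.
have -> : bilP x r + (bilP x r + bilP x r * -2) = 0 by ring.
by rewrite scale0r addr0.
Qed.

End Reflection.

Definition root_word (rs : seq Pic) := {in rs, forall r, is_root r}.

Lemma root_word_cat s1 s2 : root_word s1 -> root_word s2 -> root_word (s1 ++ s2).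
Proof. by move=> h1 h2 r; rewrite mem_cat => /orP[]; [apply: h1 | apply: h2]. Qed.

Lemma root_word_rev rs : root_word rs -> root_word (rev rs).
Proof. by move=> h r; rewrite mem_rev; apply: h. Qed.

Lemma wactD rs x y : wact rs (x + y) = wact rs x + wact rs y.
Proof. by elim: rs => //= r rs IH; rewrite IH reflD. Qed.

Lemma wactZ rs c x : wact rs (c *: x) = c *: wact rs x.
Proof. by elim: rs => //= r rs IH; rewrite IH reflZ. Qed.

Lemma wact_cat s1 s2 x : wact (s1 ++ s2) x = wact s1 (wact s2 x).
Proof. exact: foldr_cat. Qed.

Lemma bilP_wact rs x y : root_word rs -> bilP (wact rs x) (wact rs y) = bilP x y.
Proof.
elim: rs => //= r rs IH rsR.
have [rR _] := rsR r (mem_head _ _).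
by rewrite bilP_refl // IH // => s s_rs; apply: rsR; rewrite inE s_rs orbT.
Qed.

Lemma wact_revK rs x : root_word rs -> wact (rev rs) (wact rs x) = x.
Proof.
elim: rs x => //= r rs IH x rsR; have [rR _] := rsR r (mem_head _ _).
rewrite rev_cons -cats1 wact_cat /= reflK //.
by apply: IH => s s_rs; apply: rsR; rewrite inE s_rs orbT.
Qed.

Lemma wact_kcan rs : root_word rs -> wact rs kcan = kcan.
Proof.
elim: rs => //= r rs IH rsR; have [_ rk] := rsR r (mem_head _ _).
rewrite IH; last by move=> s s_rs; apply: rsR; rewrite inE s_rs orbT.
by rewrite /refl bilP_sym rk scale0r addr0.
Qed.

Lemma redAD x y : redA (x + y) = redA x + redA y.
Proof. by apply/rowP => i; rewrite !mxE intrD. Qed.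

Lemma redA2Z x : redA (2%:Z *: x) = 0.
Proof. by apply/rowP => i; rewrite !mxE intrM [2%:~R](_ : _ = 0) ?mul0r //; apply/val_inj. Qed.

Lemma liftAK : cancel liftA redA.
Proof. by move=> a; apply/rowP => i; rewrite !mxE -pmulrn natr_Zp. Qed.

Lemma redA_eq_mod2 x y : redA x = redA y -> exists z, x = y + 2%:Z *: z.
Proof.
move=> /rowP xy; exists (\row_i divz (x 0 i - y 0 i) 2); apply/rowP => i.
have := xy i; rewrite !mxE => /eqP; rewrite -subr_eq0 -intrB -(@dvdz_pcharf _ 2) //.
by move=> /divzK e; rewrite [2%Z * _]mulrC e addrC subrK.
Qed.

Lemma redA_wact rs x y : redA x = redA y -> redA (wact rs x) = redA (wact rs y).
Proof. by move=> /redA_eq_mod2[z ->]; rewrite wactD wactZ redAD redA2Z addr0. Qed.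

Lemma Wind_redA rs v : Wind rs (redA v) = redA (wact rs v).
Proof. by apply: redA_wact; rewrite liftAK. Qed.

Lemma Wind_nil a : Wind [::] a = a.
Proof. exact: liftAK. Qed.

Lemma Wind_cat s1 s2 a : Wind (s1 ++ s2) a = Wind s1 (Wind s2 a).
Proof. by rewrite [Wind s2 a]/Wind Wind_redA /Wind wact_cat. Qed.

Lemma Wind_revK rs : root_word rs -> cancel (Wind rs) (Wind (rev rs)).
Proof. by move=> rsR a; rewrite -Wind_cat /Wind wact_cat wact_revK // liftAK. Qed.

Lemma WindD rs a b : Wind rs (a + b) = Wind rs a + Wind rs b.
Proof. by rewrite /Wind -redAD -wactD; apply: redA_wact; rewrite redAD !liftAK. Qed.

Definition nq (a : AL) : int := bilP (liftA a) (liftA a).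

Lemma Wind_nq rs a : root_word rs -> (4 %| nq (Wind rs a) - nq a)%Z.
Proof.
move=> rsR; rewrite /nq /Wind; set v := wact rs (liftA a).
have [z ->] : exists z, liftA (redA v) = v + 2%:Z *: z by apply: redA_eq_mod2; rewrite liftAK.
rewrite -(bilP_wact (liftA a) (liftA a) rsR) -/v.
rewrite !bilPDl !bilPDr !bilPZl !bilPZr (bilP_sym z v).
by apply/dvdzP; exists (bilP v z + bilP z z); ring.
Qed.

Lemma qLE a : qL a = (nq a)%:~R / 2%:R.
Proof. by rewrite /qL /bilL intrM; field. Qed.

Lemma eqmod2Z_half (n m : int) : eqmod2Z (n%:~R / 2%:R) (m%:~R / 2%:R) <-> (4 %| n - m)%Z.
Proof.
rewrite /eqmod2Z.
have -> : n%:~R / 2%:R - m%:~R / 2%:R = (n - m)%:~R / 2%:R :> rat by rewrite intrB; field.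
split=> [[k nmk] | /dvdzP[k ->]]; last by exists k; rewrite intrM; field.
apply/dvdzP; exists k; apply: (@intr_inj rat).
by rewrite intrM -[(n - m)%:~R](divfK (_ : 2%:R != 0)) // nmk; ring.
Qed.

Lemma eqmod2Z_qL a b : eqmod2Z (qL a) (qL b) <-> (4 %| nq a - nq b)%Z.
Proof. by rewrite !qLE; apply: eqmod2Z_half. Qed.

Lemma OA_nq f a : OA f -> (4 %| nq (f a) - nq a)%Z.
Proof. by case=> _ [_ fq]; apply/eqmod2Z_qL. Qed.

Lemma OA0 f : OA f -> f 0 = 0.
Proof. by case=> _ [fD _]; apply: (addrI (f 0)); rewrite -fD !addr0. Qed.

Lemma OA_id : OA id.
Proof. by split; [exists id | split=> // x; apply/eqmod2Z_qL; rewrite subrr]. Qed.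

Lemma OA_Wind rs : root_word rs -> OA (Wind rs).
Proof.
move=> rsR; split; [|split].
- exists (Wind (rev rs)); first exact: Wind_revK.
  by rewrite -{2}(revK rs); apply/Wind_revK/root_word_rev.
- exact: WindD.
- by move=> a; apply/eqmod2Z_qL/Wind_nq.
Qed.

Lemma OA_comp f g : OA f -> OA g -> OA (f \o g).
Proof.
move=> [fB [fD fq]] [gB [gD gq]]; split; [exact: bij_comp | split=> [x y|x] /=].
  by rewrite gD fD.
have /eqmod2Z_qL fgx := fq (g x); have /eqmod2Z_qL gx := gq x.
by apply/eqmod2Z_qL; have := rpredD fgx gx; rewrite addrA subrK.
Qed.

Lemma OA_inv f g : OA f -> cancel f g -> cancel g f -> OA g.
Proof.
move=> [_ [fD fq]] fK gK; split; [by exists f | split=> [x y|x]].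
  by apply: (can_inj fK); rewrite fD !gK.
have /eqmod2Z_qL := fq (g x); rewrite gK => d.
by apply/eqmod2Z_qL; rewrite -opprB rpredN.
Qed.

Lemma transitive_onI (P : AL -> Prop) x0 :
  (forall z, P z -> exists f, OA f /\ f x0 = z) -> transitive_on P.
Proof.
move=> reach x y /reach[fx [fxO <-]] /reach[fy [fyO <-]].
have fxO' := fxO; case: fxO' => [[gx fxK gxK] _].
by exists (fy \o gx); split; [apply/OA_comp/(OA_inv fxO) | rewrite /= fxK].
Qed.

Lemma exactly_two_orbitsI (P : AL -> Prop) x1 x0 :
  P x1 -> P x0 -> x1 != x0 -> (forall f, OA f -> f x1 = x1) ->
  (forall z, P z -> z != x1 -> exists f, OA f /\ f x0 = z) ->
  exactly_two_orbits P.
Proof.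
move=> Px1 Px0 x10 fix1 reach; exists x1, x0; split=> //.
  by move=> [f [/fix1 -> x1x0]]; rewrite x1x0 eqxx in x10.
move=> z Pz; have [<-|zx1] := eqVneq z x1; first by exists id; split; [exact: OA_id | left].
by have [f [fO fz]] := reach z Pz zx1; exists f; split; [| right].
Qed.

Definition vec (f : nat -> int) : seq int := mkseq f 8.
Definition fromV (v : seq int) : Pic := \row_i nth 0 v i.

Definition bil_seq (x y : seq int) : int :=
  foldr (fun i acc => (if i == 0%N then 1 else -1) * (nth 0 x i * nth 0 y i) + acc) 0 (iota 0 8).

Lemma bilP_fromV x y : bilP (fromV x) (fromV y) = bil_seq x y.
Proof. by rewrite /bilP !big_ord_recl big_ord0 !mxE. Qed.

Definition refl_seq (r x : seq int) : seq int :=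
  vec (fun i => nth 0 x i + bil_seq x r * nth 0 r i).

Lemma refl_fromV r x : refl (fromV r) (fromV x) = fromV (refl_seq r x).
Proof. by apply/rowP => i; rewrite !mxE nth_mkseq // bilP_fromV. Qed.

Definition kvec : seq int := vec (fun i => if i == 0%N then -3 else 1).

Lemma kcan_fromV : kcan = fromV kvec.
Proof. by apply/rowP => i; rewrite !mxE nth_mkseq. Qed.

Definition b2z (b : bool) : int := (b : nat)%:Z.
Definition oddz (z : int) : bool := odd `|z|%N.

Definition AL_of_bits (l : seq bool) : AL := \row_i (nth false l i : nat)%:R.
Definition bits_of_AL (a : AL) : seq bool := mkseq (fun i => a 0 (inord i) != 0) 8.

Lemma size_bits_of_AL a : size (bits_of_AL a) = 8%N.
Proof. exact: size_mkseq. Qed.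

Lemma bits_of_ALK : cancel bits_of_AL AL_of_bits.
Proof.
move=> a; apply/rowP => i; rewrite !mxE nth_mkseq // inord_val.
by case: (a 0 i) => [[|[|]]] //= ?; apply/val_inj.
Qed.

Lemma AL_of_bits_inj l1 l2 :
  size l1 = 8%N -> size l2 = 8%N -> AL_of_bits l1 = AL_of_bits l2 -> l1 = l2.
Proof.
move=> s1 s2 /rowP l12; apply: (@eq_from_nth _ false); first by rewrite s1 s2.
move=> i; rewrite s1 => lti; have := l12 (Ordinal lti); rewrite !mxE /=.
by case: (nth false l1 i); case: (nth false l2 i) => // /(congr1 val).
Qed.

Lemma AL_of_bitsK l : size l = 8%N -> bits_of_AL (AL_of_bits l) = l.
Proof. by move=> sz; apply: AL_of_bits_inj; rewrite ?size_bits_of_AL ?bits_of_ALK. Qed.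

Lemma nth_map_default (A B : Type) (f : A -> B) a0 l i :
  nth (f a0) (map f l) i = f (nth a0 l i).
Proof. by elim: l i => [|x l IH] [|i] //=. Qed.

Lemma liftA_of_bits l : liftA (AL_of_bits l) = fromV (map b2z l).
Proof.
by apply/rowP => i; rewrite !mxE -[0](_ : b2z false = 0) // nth_map_default; case: nth.
Qed.

Lemma Z2_intr (z : int) : (z%:~R : 'Z_2) = (oddz z : nat)%:R.
Proof.
have oddE n : (n%:R : 'Z_2) = (odd n : nat)%:R.
  by elim: n => // n IH; rewrite mulrS IH /=; case: (odd n); apply/val_inj.
case: z => n; first by rewrite /oddz /= -pmulrn; apply: oddE.
rewrite NegzE mulrNz -pmulrn /oddz abszN /= (oddE n.+1) /=.
by case: (odd n); apply/val_inj.
Qed.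

Lemma redA_fromV v : redA (fromV v) = AL_of_bits (map oddz v).
Proof.
by apply/rowP => i; rewrite !mxE Z2_intr -[false](_ : oddz 0 = false) // nth_map_default.
Qed.

Definition refl_bits (r : seq int) (l : seq bool) : seq bool :=
  map oddz (refl_seq r (map b2z l)).
Definition word_bits (ws : seq (seq int)) (l : seq bool) : seq bool := foldr refl_bits l ws.

Lemma Wind_bits ws l : Wind (map fromV ws) (AL_of_bits l) = AL_of_bits (word_bits ws l).
Proof.
elim: ws => [|r ws IH] /=; first exact: Wind_nil.
by rewrite -cat1s Wind_cat IH /Wind /= liftA_of_bits refl_fromV redA_fromV.
Qed.

Definition nq_bits (l : seq bool) : int := bil_seq (map b2z l) (map b2z l).

Lemma nq_of_bits l : nq (AL_of_bits l) = nq_bits l.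
Proof. by rewrite /nq liftA_of_bits bilP_fromV. Qed.

Lemma nq_bits_of_AL a : nq_bits (bits_of_AL a) = nq a.
Proof. by rewrite -nq_of_bits bits_of_ALK. Qed.

Definition xor_bits (l1 l2 : seq bool) : seq bool :=
  mkseq (fun i => nth false l1 i (+) nth false l2 i) 8.

Lemma AL_of_bits_xor l1 l2 : AL_of_bits (xor_bits l1 l2) = AL_of_bits l1 + AL_of_bits l2.
Proof.
apply/rowP => i; rewrite !mxE nth_mkseq //.
by case: (nth false l1 i); case: (nth false l2 i); apply/val_inj.
Qed.

Definition zero_bits : seq bool := nseq 8 false.

Lemma AL_of_bits0 : AL_of_bits zero_bits = 0.
Proof. by apply/rowP => i; rewrite !mxE nth_nseq if_same. Qed.

Fixpoint bit_lists (n : nat) : seq (seq bool) :=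
  if n is n'.+1 then [seq b :: l | b <- [:: false; true], l <- bit_lists n'] else [:: [::]].

Lemma mem_bit_lists l : l \in bit_lists (size l).
Proof.
elim: l => [|b l IH] //=; rewrite mem_cat cats0.
by case: b; apply/orP; [right | left]; apply/mapP; exists l.
Qed.

Lemma all_bit_lists (P : pred (seq bool)) :
  all P (bit_lists 8) -> forall l, size l = 8%N -> P l.
Proof. by move=> /allP allP l sz; apply: allP; rewrite -sz mem_bit_lists. Qed.

(* The 63 roots [e_j - e_i], [e_i + e_j + e_k - e_0] and [e_1 + ... + e_7 - e_i - 2 e_0],
   one from each pair [{r, -r}]. *)
Definition e7_roots : seq (seq int) :=
  [seq vec (fun t => (t == j)%:Z - (t == i)%:Z) | i <- iota 1 7, j <- iota i.+1 (7 - i)] ++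
  flatten [seq [seq vec (fun t => (t \in [:: i; j; k])%:Z - (t == 0)%N%:Z)
                 | k <- iota j.+1 (7 - j)] | i <- iota 1 7, j <- iota i.+1 (7 - i)] ++
  [seq vec (fun t => (t != i)%:Z - 3 * (t == 0)%N%:Z) | i <- iota 1 7].

Lemma e7_roots_norm : all (fun r => (bil_seq r r == -2) && (bil_seq r kvec == 0)) e7_roots.
Proof. by vm_compute. Qed.

Lemma is_root_e7 r : r \in e7_roots -> is_root (fromV r).
Proof.
move=> /(allP e7_roots_norm) /andP[/eqP rr /eqP rk].
by split; rewrite ?kcan_fromV bilP_fromV.
Qed.

Lemma root_word_e7 (ws : seq (seq int)) :
  {subset ws <= e7_roots} -> root_word (map fromV ws).
Proof. by move=> sub _ /mapP[r /sub r_e7 ->]; apply: is_root_e7. Qed.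

Definition word_table := seq (seq bool * seq (seq int)).

Definition add_fresh (tab : word_table) (c : seq bool * seq (seq int)) : word_table :=
  if c.1 \in unzip1 tab then tab else c :: tab.

Fixpoint bfs (n : nat) (gens : seq (seq int)) (tab frontier : word_table) : word_table :=
  if n is n'.+1 then
    let tab' := foldl add_fresh tab [seq (refl_bits g p.1, g :: p.2) | p <- frontier, g <- gens] in
    bfs n' gens tab' (take (size tab' - size tab) tab')
  else tab.

Definition orbit_words (gens : seq (seq int)) (x : seq bool) : word_table :=
  bfs 256 gens [:: (x, [::])] [:: (x, [::])].

Definition transporter (tab : word_table) (y : seq bool) : seq (seq int) :=
  nth [::] (unzip2 tab) (index y (unzip1 tab)).

(* The search [orbit_words] is not verified: [reaches] rechecks every word it returns. *)
Definition reaches (gens : seq (seq int)) (x : seq bool) (P : pred (seq bool)) : bool :=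
  let tab := orbit_words gens x in
  all (fun l => P l ==> let w := transporter tab l in all (mem gens) w && (word_bits w x == l))
    (bit_lists 8).

Lemma reachesP gens x P : reaches gens x P ->
  forall l, size l = 8%N -> P l -> exists2 w, {subset w <= gens} & word_bits w x = l.
Proof.
move=> /all_bit_lists reach l /reach /implyP Pl /Pl /andP[/allP sub /eqP wx].
by exists (transporter (orbit_words gens x) l).
Qed.

Definition unit_bits (i : nat) : seq bool := mkseq (fun t => t == i) 8.
Definition nq_mod4 (m : int) (l : seq bool) : bool := (4 %| nq_bits l - m)%Z.

(* With [e_3] in position 3, the reflections fixing [e_0], [e_1], [e_2] would not reach the
   candidate [e_3 + ... + e_7] for the image of [e_3]. *)
Definition chain : seq (seq bool) :=
  [:: unit_bits 0; unit_bits 1; unit_bits 2; xor_bits (unit_bits 3) (unit_bits 4);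
      unit_bits 3; unit_bits 5; unit_bits 6; unit_bits 7].
Definition chain_vec (j : nat) : seq bool := nth [::] chain j.

Definition stab_gens (m : nat) : seq (seq int) :=
  [seq r <- e7_roots | all (fun j => refl_bits r (chain_vec j) == chain_vec j) (iota 0 m)].

Definition candidate (m : nat) (l : seq bool) : bool :=
  let u := chain_vec in
  nq_mod4 (nq_bits (u m)) l &&
  all (fun j => nq_mod4 (nq_bits (xor_bits (u m) (u j))) (xor_bits l (u j))) (iota 0 m).

Lemma chain_levels :
  all (fun m => reaches (stab_gens m) (chain_vec m) (candidate m)) (iota 0 8).
Proof. by vm_compute. Qed.

Lemma chain_spans : all (fun l =>
  has (fun s => foldr xor_bits zero_bits (mask s chain) == l) (bit_lists 8)) (bit_lists 8).
Proof. by vm_compute. Qed.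

Definition Wimage (f : AL -> AL) := exists rs, root_word rs /\ forall a, f a = Wind rs a.

Definition fixes_chain (f : AL -> AL) (m : nat) :=
  forall j, (j < m)%N -> f (AL_of_bits (chain_vec j)) = AL_of_bits (chain_vec j).

Lemma word_bits_fix w x : {in w, forall r, refl_bits r x = x} -> word_bits w x = x.
Proof.
elim: w => //= r w IH fix_x; rewrite IH ?fix_x ?mem_head // => s s_w.
by apply: fix_x; rewrite inE s_w orbT.
Qed.

Lemma OA_fix_xor_sum f ls :
  OA f -> {in ls, forall l, f (AL_of_bits l) = AL_of_bits l} ->
  f (AL_of_bits (foldr xor_bits zero_bits ls)) = AL_of_bits (foldr xor_bits zero_bits ls).
Proof.
move=> fO; have [_ [fD _]] := fO; elim: ls => /= [|l ls IH] fix_ls.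
  by rewrite AL_of_bits0 OA0.
rewrite AL_of_bits_xor fD fix_ls ?mem_head // IH // => s s_ls.
by apply: fix_ls; rewrite inE s_ls orbT.
Qed.

Lemma fixes_chain_id f : OA f -> fixes_chain f 8 -> f =1 id.
Proof.
move=> fO fix8 a; rewrite -[a]bits_of_ALK.
have /hasP[s _ /eqP <-] := all_bit_lists chain_spans (size_bits_of_AL a).
apply: (OA_fix_xor_sum fO) => l /mem_mask l_chain.
by rewrite -(nth_index [::] l_chain) fix8 // -[8%N]/(size chain) index_mem.
Qed.

Lemma fixes_chain_step m : (m < 8)%N ->
  (forall g, OA g -> fixes_chain g m.+1 -> Wimage g) ->
  forall f, OA f -> fixes_chain f m -> Wimage f.
Proof.
move=> ltm8 IH f fO fixm; have [_ [fD _]] := fO.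
set l := bits_of_AL (f (AL_of_bits (chain_vec m))).
have cand : candidate m l.
  rewrite /candidate /nq_mod4 nq_bits_of_AL -nq_of_bits OA_nq //=.
  apply/allP => j; rewrite mem_iota => /andP[_ ltjm].
  by rewrite -!nq_of_bits !AL_of_bits_xor bits_of_ALK -{1}(fixm j ltjm) -fD OA_nq.
have /reachesP reach : reaches (stab_gens m) (chain_vec m) (candidate m).
  by apply: (allP chain_levels); rewrite mem_iota.
have [w w_stab wum] := reach l (size_bits_of_AL _) cand.
have /root_word_e7 WR : {subset w <= e7_roots}.
  by move=> r /w_stab; rewrite mem_filter => /andP[].
set W := map fromV w.
have W_fix j : (j < m)%N -> Wind W (AL_of_bits (chain_vec j)) = AL_of_bits (chain_vec j).
  move=> ltjm; rewrite Wind_bits word_bits_fix // => r /w_stab.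
  by rewrite mem_filter => /andP[/allP/(_ j) + _]; rewrite mem_iota ltjm => /(_ isT)/eqP.
have W_um : Wind W (AL_of_bits (chain_vec m)) = f (AL_of_bits (chain_vec m)).
  by rewrite Wind_bits wum bits_of_ALK.
have [rs [rsR g_rs]] : Wimage (Wind (rev W) \o f).
  apply: IH; first by apply: OA_comp fO; apply/OA_Wind/root_word_rev.
  move=> j; rewrite ltnS leq_eqVlt => /orP[/eqP -> | ltjm] /=.
    by rewrite -W_um Wind_revK.
  by rewrite fixm // -{1}(W_fix j ltjm) Wind_revK.
exists (W ++ rs); split; first exact: root_word_cat.
by move=> a; rewrite Wind_cat -g_rs /= -[LHS](Wind_revK (root_word_rev WR)) revK.
Qed.

Lemma OA_Wimage f : OA f -> Wimage f.
Proof.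
have chain_ind n m : (m + n = 8)%N -> forall f, OA f -> fixes_chain f m -> Wimage f.
  elim: n m => [|n IH] m; rewrite ?addn0 => mn8 g gO.
    rewrite mn8 => /(fixes_chain_id gO) g_id; exists [::]; split=> // a.
    by rewrite g_id Wind_nil.
  apply: fixes_chain_step gO; first by rewrite -mn8 -addSnnS leq_addr.
  by apply: IH; rewrite addSnnS.
by move=> fO; apply: (chain_ind 8%N 0%N).
Qed.

Lemma OA_fix_kcan f : OA f -> f (redA kcan) = redA kcan.
Proof. by move=> /OA_Wimage[rs [rsR ->]]; rewrite Wind_redA wact_kcan. Qed.

Lemma CsetE (m : int) z : Cset (m%:~R / 2%:R) z <-> nq_mod4 m (bits_of_AL z).
Proof. by rewrite /Cset qLE eqmod2Z_half /nq_mod4 nq_bits_of_AL. Qed.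

Lemma reaches_OA x (P : pred (seq bool)) : reaches e7_roots x P ->
  forall z, P (bits_of_AL z) -> exists f, OA f /\ f (AL_of_bits x) = z.
Proof.
move=> /reachesP reach z /(reach _ (size_bits_of_AL z))[w /root_word_e7 wR wx].
by exists (Wind (map fromV w)); split; [apply: OA_Wind | rewrite Wind_bits wx bits_of_ALK].
Qed.

Lemma transitive_class (m : int) x :
  reaches e7_roots x (nq_mod4 m) -> transitive_on (Cset (m%:~R / 2%:R)).
Proof.
move=> /reaches_OA reach; apply: (transitive_onI (x0 := AL_of_bits x)) => z /CsetE.
exact: reach.
Qed.

Lemma two_orbits_class (m : int) x1 x :
  (forall f, OA f -> f (AL_of_bits x1) = AL_of_bits x1) ->
  size x1 = 8%N -> size x = 8%N -> x1 != x -> nq_mod4 m x1 -> nq_mod4 m x ->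
  reaches e7_roots x (fun l => nq_mod4 m l && (l != x1)) ->
  exactly_two_orbits (Cset (m%:~R / 2%:R)).
Proof.
move=> fix1 sz1 sz x1x mx1 mx /reaches_OA reach.
apply: (exactly_two_orbitsI (x1 := AL_of_bits x1) (x0 := AL_of_bits x)).
all: rewrite ?CsetE ?AL_of_bitsK //.
- by apply: contra_neq x1x; apply: AL_of_bits_inj.
- move=> z /CsetE mz zx1; apply: reach; rewrite mz.
  by apply: contra_neq zx1 => <-; rewrite bits_of_ALK.
Qed.

Theorem lemma2p6 :
  (* the natural map W(E_7) -> O(A_{L_+}) lands in O(A_{L_+}) and is surjective *)
  ((forall rs : seq Pic, {in rs, forall r, is_root r} -> OA (Wind rs)) /\
   (forall f, OA f -> exists rs : seq Pic,
        {in rs, forall r, is_root r} /\ forall a, f a = Wind rs a)) /\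
  transitive_on (Cset (- (1 / 2%:R))) /\
  transitive_on (Cset (1 / 2%:R)) /\
  exactly_two_orbits (Cset 1) /\
  exactly_two_orbits (Cset 0).
Proof.
split; first by split; [exact: OA_Wind | exact: OA_Wimage].
split; last split; last split.
- rewrite [X in Cset X](_ : _ = (-1)%:~R / 2%:R); last by field.
  by apply: (transitive_class (x := unit_bits 1)); vm_compute.
- rewrite [X in Cset X](_ : _ = 1%:~R / 2%:R); last by field.
  by apply: (transitive_class (x := unit_bits 0)); vm_compute.
- rewrite [X in Cset X](_ : _ = 2%:~R / 2%:R); last by field.
  have fix_k f : OA f -> f (AL_of_bits (map oddz kvec)) = AL_of_bits (map oddz kvec).
    by move/OA_fix_kcan; rewrite kcan_fromV redA_fromV.
  by apply: (two_orbits_class (x := xor_bits (unit_bits 1) (unit_bits 2)) fix_k); vm_compute.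
- rewrite [X in Cset X](_ : _ = 0%:~R / 2%:R); last by rewrite mul0r.
  have fix_0 f : OA f -> f (AL_of_bits zero_bits) = AL_of_bits zero_bits.
    by move/OA0; rewrite AL_of_bits0.
  by apply: (two_orbits_class (x := xor_bits (unit_bits 0) (unit_bits 1)) fix_0); vm_compute.
Qed.
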